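(* Let $\lambda>0$ and $\alpha\in(0,1)$. Let $J$ and $N$ be the regular and singular solutions of $\varphi''+\frac{2}{r}\varphi'+\lambda\varphi=0$ on $(0,\infty)$, normalized so that $J(r)=r^{-1}\cos(\sqrt\lambda r-\zeta)+O(r^{-2})$ and $N(r)=r^{-1}\sin(\sqrt\lambda r-\zeta)+O(r^{-2})$ as $r\to+\infty$, where $\zeta\in\mathbb{R}$ is a constant depending on $\lambda$. Let $\rho$ be a smooth cutoff with $\rho(r)=1$ for $r>2$ and $\rho(r)=0$ for $r<1$. Let $$\eta(r)=\rho(r)r^{-2}\big[k_1\sin^2(\sqrt\lambda r-\zeta)+k_2\cos^2(\sqrt\lambda r-\zeta)+k_3\sin(\sqrt\lambda r-\zeta)\cos(\sqrt\lambda r-\zeta)\big]+\bar\eta(r),$$ where $k_1,k_2,k_3\in\mathbb{R}$ and $\|\bar\eta(r)(1+r)^3\|_{C^{0,\alpha}}+\sum_i|k_i|<C$. Then the equation $$h''+\frac{2}{r}h'+\lambda h=\eta$$ has a solution $h\in C^{0,\alpha}[0,+\infty)$ of the form $$h(r)=c_1r^{-1}\sin(\sqrt\lambda r-\zeta)+\bar h(r),\quad r>1,$$ where $|c_1|\le C'$ and $|\bar h(r)|\le C'(1+r)^{-2}$, with $C'$ depending only on $C$ and $\lambda$. *)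

From Stdlib Require Import Reals Lra.
From Coquelicot Require Import Coquelicot.
Open Scope R_scope.

Definition solves_radial (lam : R) (f phi : R -> R) : Prop :=
  exists phi1 phi2 : R -> R,
    forall r, 0 < r ->
      is_derive phi r (phi1 r) /\ is_derive phi1 r (phi2 r) /\
      phi2 r + (2 / r) * phi1 r + lam * phi r = f r.

Definition bigO_inv_sq (f g : R -> R) : Prop :=
  exists K R0, forall r, R0 <= r -> Rabs (f r - g r) <= K / (r * r).

Definition bounded_near0 (f : R -> R) : Prop :=
  exists M, forall r, 0 < r <= 1 -> Rabs (f r) <= M.

Definition holder_semi_le (alpha : R) (f : R -> R) (B : R) : Prop :=
  forall x y, 0 <= x -> 0 <= y -> x <> y ->
    Rabs (f x - f y) <= B * Rpower (Rabs (x - y)) alpha.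

Definition sup_le (f : R -> R) (A : R) : Prop :=
  forall x, 0 <= x -> Rabs (f x) <= A.

Definition C0alpha (alpha : R) (f : R -> R) : Prop :=
  exists A B, sup_le f A /\ holder_semi_le alpha f B.

Definition smooth (f : R -> R) : Prop := forall n x, ex_derive_n f n x.

Definition eta_fun (lam zeta k1 k2 k3 : R) (rho etabar : R -> R) (r : R) : R :=
  rho r * / (r * r) *
    (k1 * (sin (sqrt lam * r - zeta))^2 + k2 * (cos (sqrt lam * r - zeta))^2
     + k3 * sin (sqrt lam * r - zeta) * cos (sqrt lam * r - zeta))
  + etabar r.

(* Put u = r h, so that the radial equation becomes u'' + lam u = r eta.  Since J is
   bounded at 0, r J(r) is a multiple p sin(sqrt lam r) of the regular solution of the
   harmonic oscillator, and comparing with the asymptotics of J forces p = +-1 and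
   cos(sqrt lam r - zeta) = p sin(sqrt lam r): the phase is pinned down, and
   r eta = k(r)/r + O(r^-2) with k a quadratic form in cos and sin of sqrt lam r.
   Variation of parameters, with the cosine coefficient integrated from infinity, gives a
   solution with u(0) = 0 and u(r) = -L cos(sqrt lam r)/sqrt lam + O(1/r); the rate comes
   from integrating k(t)/t against cos and sin by parts, which works because k cos and
   k sin have bounded primitives.  Then h = u/r is bounded and Lipschitz, hence C^{0,alpha},
   and h - c1 r^-1 sin(sqrt lam r - zeta) = O(r^-2) with c1 = p L / sqrt lam. *)

From Stdlib Require Import Reals Lra Lia.
From Coquelicot Require Import Coquelicot.
Open Scope R_scope.

(** * Elementary calculus *)

(* Coquelicot states these rules for the [plus]/[mult] of abstract structures, which do
   not unify with [Rplus]/[Rmult]. *)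
Lemma is_derive_Rplus (f g : R -> R) (x df dg : R) :
  is_derive f x df -> is_derive g x dg -> is_derive (fun t => f t + g t) x (df + dg).
Proof. intros Hf Hg. exact (is_derive_plus f g x df dg Hf Hg). Qed.

Lemma is_derive_Rminus (f g : R -> R) (x df dg : R) :
  is_derive f x df -> is_derive g x dg -> is_derive (fun t => f t - g t) x (df - dg).
Proof. intros Hf Hg. exact (is_derive_minus f g x df dg Hf Hg). Qed.

Lemma is_derive_Rmult (f g : R -> R) (x df dg : R) :
  is_derive f x df -> is_derive g x dg ->
  is_derive (fun t => f t * g t) x (df * g x + f x * dg).
Proof. intros Hf Hg. apply (is_derive_mult f g x df dg Hf Hg). intros; apply Rmult_comm. Qed.

Lemma is_derive_eq (f : R -> R) (x l l' : R) : is_derive f x l -> l = l' -> is_derive f x l'.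
Proof. intros H <-; exact H. Qed.

Lemma continuous_Rplus (f g : R -> R) (x : R) :
  continuous f x -> continuous g x -> continuous (fun t => f t + g t) x.
Proof. intros Hf Hg. exact (continuous_plus f g x Hf Hg). Qed.

Lemma continuous_Rminus (f g : R -> R) (x : R) :
  continuous f x -> continuous g x -> continuous (fun t => f t - g t) x.
Proof. intros Hf Hg. exact (continuous_minus f g x Hf Hg). Qed.

Lemma continuous_Rmult (f g : R -> R) (x : R) :
  continuous f x -> continuous g x -> continuous (fun t => f t * g t) x.
Proof. intros Hf Hg. exact (continuous_mult f g x Hf Hg). Qed.

Lemma continuous_of_is_derive (f : R -> R) (x l : R) : is_derive f x l -> continuous f x.
Proof. intros H. apply (ex_derive_continuous (V := R_NormedModule)). exists l; exact H. Qed.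

Lemma is_derive_Rinv (x : R) : x <> 0 -> is_derive (fun t => / t) x (- / (x * x)).
Proof. intros Hx. auto_derive; [exact Hx | field; exact Hx]. Qed.

Lemma continuous_inv (x : R) : x <> 0 -> continuous (fun t => / t) x.
Proof. intros Hx. exact (continuous_of_is_derive _ _ _ (is_derive_Rinv x Hx)). Qed.

Lemma continuous_cos_mult (s x : R) : continuous (fun t => cos (s * t)) x.
Proof. apply continuous_of_is_derive with (- s * sin (s * x)). auto_derive; [exact I | ring]. Qed.

Lemma continuous_sin_mult (s x : R) : continuous (fun t => sin (s * t)) x.
Proof. apply continuous_of_is_derive with (s * cos (s * x)). auto_derive; [exact I | ring]. Qed.

Lemma mean_value_bound (f df : R -> R) (a b M : R) : a <= b ->
  (forall x, a <= x <= b -> is_derive f x (df x)) ->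
  (forall x, a <= x <= b -> Rabs (df x) <= M) ->
  Rabs (f b - f a) <= M * (b - a).
Proof.
  intros Hab HD HB.
  destruct (MVT_gen f a b df) as [c [Hc E]].
  - intros x Hx. rewrite Rmin_left, Rmax_right in Hx by lra. apply HD; lra.
  - intros x Hx. rewrite Rmin_left, Rmax_right in Hx by lra.
    apply continuity_pt_filterlim, continuous_of_is_derive with (df x), HD; lra.
  - rewrite Rmin_left, Rmax_right in Hc by lra.
    rewrite E, Rabs_mult, (Rabs_right (b - a)) by lra.
    apply Rmult_le_compat_r; [lra | apply HB; lra].
Qed.

Lemma const_of_derive_zero (f : R -> R) (a b : R) : 0 < a -> 0 < b ->
  (forall x, 0 < x -> is_derive f x 0) -> f b = f a.
Proof.
  intros Ha Hb H.
  assert (Hab : forall u v, 0 < u <= v -> Rabs (f v - f u) <= 0 * (v - u)).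
  { intros u v Huv. apply (mean_value_bound f (fun _ => 0)); [lra | | ].
    - intros x Hx; apply H; lra.
    - intros x _; rewrite Rabs_R0; lra. }
  destruct (Rle_dec a b) as [Hle | Hle].
  - assert (E := Hab a b ltac:(lra)). rewrite Rmult_0_l in E.
    assert (E0 := Rabs_pos (f b - f a)). apply Rminus_diag_uniq, Rabs_eq_0. lra.
  - assert (E := Hab b a ltac:(lra)). rewrite Rmult_0_l in E.
    assert (E0 := Rabs_pos (f a - f b)). symmetry. apply Rminus_diag_uniq, Rabs_eq_0. lra.
Qed.

Lemma ex_RInt_of_continuous (f : R -> R) (a b : R) : a <= b ->
  (forall x, a <= x <= b -> continuous f x) -> ex_RInt f a b.
Proof.
  intros Hab H. apply (ex_RInt_continuous (V := R_CompleteNormedModule)).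
  intros z Hz. rewrite Rmin_left, Rmax_right in Hz by lra. auto.
Qed.

Lemma RInt_Chasles_continuous (f : R -> R) (a b c : R) : (forall x, continuous f x) ->
  RInt f a b + RInt f b c = RInt f a c.
Proof.
  intros H. apply (RInt_Chasles (V := R_CompleteNormedModule) f a b c);
    apply (ex_RInt_continuous (V := R_CompleteNormedModule)); auto.
Qed.

Lemma is_derive_RInt_from_0 (f : R -> R) (r : R) : (forall x, continuous f x) ->
  is_derive (fun b => RInt f 0 b) r (f r).
Proof.
  intros Hf. apply (is_derive_RInt (V := R_CompleteNormedModule) f _ 0 r); [| auto].
  apply filter_forall. intros b. apply (RInt_correct (V := R_CompleteNormedModule)).
  apply (ex_RInt_continuous (V := R_CompleteNormedModule)). auto.
Qed.

Lemma abs_RInt_le_inv_sq (f : R -> R) (r r' M : R) : 0 < r -> r <= r' ->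
  (forall x, r <= x <= r' -> continuous f x) ->
  (forall x, r <= x <= r' -> Rabs (f x) <= M / (x * x)) ->
  Rabs (RInt f r r') <= M / r.
Proof.
  intros Hr Hrr Hc Hb.
  assert (HM : 0 <= M).
  { assert (H := Hb r ltac:(lra)). assert (0 <= Rabs (f r)) by apply Rabs_pos.
    assert (0 < r * r) by nra. apply Rmult_le_reg_r with (/ (r * r)).
    - apply Rinv_0_lt_compat; lra.
    - lra. }
  assert (Hprim : is_RInt (fun x => M / (x * x)) r r' (minus (- M / r') (- M / r))).
  { apply (is_RInt_derive (fun x => - M / x)); intros x Hx;
      rewrite Rmin_left, Rmax_right in Hx by lra.
    - auto_derive; [lra | field; lra].
    - apply continuous_of_is_derive with (- 2 * M / (x * x * x)).
      auto_derive; [intro; nra | field; lra]. }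
  apply Rle_trans with (RInt (fun x => Rabs (f x)) r r').
  { apply abs_RInt_le; [exact Hrr | apply ex_RInt_of_continuous; auto]. }
  apply Rle_trans with (RInt (fun x => M / (x * x)) r r').
  - apply RInt_le; [exact Hrr | | eexists; exact Hprim | intros x Hx; apply Hb; lra].
    apply ex_RInt_of_continuous; [exact Hrr |]. intros x Hx. apply continuous_Rabs_comp; auto.
  - rewrite (is_RInt_unique _ _ _ _ Hprim). unfold minus, plus, opp; simpl.
    assert (0 <= M / r') by (apply Rdiv_le_0_compat; lra). unfold Rdiv in *. lra.
Qed.

Lemma Rabs_div_le (a b M r : R) : 0 < r <= b -> Rabs a <= M -> Rabs (a / b) <= M / r.
Proof.
  intros Hrb Ha. assert (0 <= M) by (eapply Rle_trans; [apply Rabs_pos | exact Ha]).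
  unfold Rdiv. rewrite Rabs_mult, Rabs_inv, (Rabs_right b) by lra.
  apply Rmult_le_compat; [apply Rabs_pos | left; apply Rinv_0_lt_compat; lra | exact Ha |].
  apply Rinv_le_contravar; lra.
Qed.

Lemma mean_value_linearization (f df : R -> R) (a b c M : R) : a <= b ->
  (forall x, a <= x <= b -> is_derive f x (df x)) ->
  (forall x, a <= x <= b -> Rabs (df x - df c) <= M) ->
  Rabs (f b - f a - df c * (b - a)) <= M * (b - a).
Proof.
  intros Hab HD HB.
  replace (f b - f a - df c * (b - a)) with ((f b - b * df c) - (f a - a * df c)) by ring.
  apply (mean_value_bound (fun t => f t - t * df c) (fun t => df t - df c)); [exact Hab | | exact HB].
  intros x Hx. eapply is_derive_eq.
  - apply is_derive_Rminus; [apply HD; exact Hx |].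
    apply (is_derive_Rmult (fun t => t) (fun _ => df c)); [apply (is_derive_id x) | apply is_derive_const].
  - cbn. ring.
Qed.

Lemma Rabs_unit_comb_le (a b x y X Y : R) : Rabs a <= 1 -> Rabs b <= 1 ->
  Rabs x <= X -> Rabs y <= Y -> Rabs (a * x + b * y) <= X + Y.
Proof.
  intros Ha Hb Hx Hy. eapply Rle_trans; [apply Rabs_triang |]. rewrite !Rabs_mult.
  assert (H1 := Rabs_pos a). assert (H2 := Rabs_pos b).
  assert (H3 := Rabs_pos x). assert (H4 := Rabs_pos y).
  assert (Rabs a * Rabs x <= 1 * X) by (apply Rmult_le_compat; lra).
  assert (Rabs b * Rabs y <= 1 * Y) by (apply Rmult_le_compat; lra).
  lra.
Qed.

Lemma Rabs_sin_le_1 (x : R) : Rabs (sin x) <= 1.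
Proof. apply Rabs_le, SIN_bound. Qed.

Lemma Rabs_cos_le_1 (x : R) : Rabs (cos x) <= 1.
Proof. apply Rabs_le, COS_bound. Qed.

(** * Oscillatory integrals *)

(* Integration by parts: int D/x = [P/x] + int P/x^2. *)
Lemma abs_RInt_derive_div_le (P D : R -> R) (r r' PB : R) : 0 < r -> r <= r' ->
  (forall x, is_derive P x (D x)) -> (forall x, continuous D x) ->
  (forall x, Rabs (P x) <= PB) ->
  Rabs (RInt (fun x => D x / x) r r') <= 3 * PB / r.
Proof.
  intros Hr Hrr HD HDc HP.
  assert (CP : forall x, continuous P x) by (intros x; exact (continuous_of_is_derive _ _ _ (HD x))).
  assert (Cq : forall x, r <= x <= r' -> continuous (fun t => P t / (t * t)) x).
  { intros x Hx. apply continuous_Rmult; [apply CP |].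
    apply continuous_of_is_derive with (- 2 / (x * x * x)). auto_derive; [intro; nra | field; lra]. }
  assert (Hparts : is_RInt (fun x => D x / x - P x / (x * x)) r r' (minus (P r' / r') (P r / r))).
  { apply (is_RInt_derive (fun x => P x / x)); intros x Hx;
      rewrite Rmin_left, Rmax_right in Hx by lra.
    - eapply is_derive_eq; [apply (is_derive_Rmult P (fun x => / x)); [apply HD | apply is_derive_Rinv; lra] |].
      field; lra.
    - apply continuous_Rminus; [| apply Cq; lra].
      apply continuous_Rmult; [apply HDc | apply continuous_inv; lra]. }
  assert (Hrest : is_RInt (fun x => P x / (x * x)) r r' (RInt (fun x => P x / (x * x)) r r')).
  { apply (RInt_correct (V := R_CompleteNormedModule)), ex_RInt_of_continuous; auto. }
  assert (E : RInt (fun x => D x / x) r r'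
              = (P r' / r' - P r / r) + RInt (fun x => P x / (x * x)) r r').
  { apply is_RInt_unique. eapply is_RInt_ext; [| exact (is_RInt_plus _ _ _ _ _ _ Hparts Hrest)].
    intros x _. cbn. ring. }
  rewrite E.
  assert (B1 : Rabs (P r' / r') <= PB / r) by (apply Rabs_div_le; auto; lra).
  assert (B2 : Rabs (P r / r) <= PB / r) by (apply Rabs_div_le; auto; lra).
  assert (B3 : Rabs (RInt (fun x => P x / (x * x)) r r') <= PB / r).
  { apply abs_RInt_le_inv_sq; auto. intros x Hx. apply Rabs_div_le; auto. nra. }
  assert (T := Rabs_triang (P r' / r' - P r / r) (RInt (fun x => P x / (x * x)) r r')).
  assert (T' := Rabs_triang (P r' / r') (- (P r / r))). rewrite Rabs_Ropp in T'.
  unfold Rminus in *. unfold Rdiv in *. lra.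
Qed.

Lemma abs_RInt_mult_le (phi g : R -> R) (a b M : R) : 0 <= a <= b ->
  (forall x, continuous phi x) -> (forall x, continuous g x) ->
  (forall x, Rabs (phi x) <= 1) -> (forall x, 0 <= x -> Rabs (g x) <= M) ->
  Rabs (RInt (fun t => phi t * g t) a b) <= (b - a) * M.
Proof.
  intros Hab Cphi Cg Bphi Bg.
  apply abs_RInt_le_const; [lra | apply ex_RInt_of_continuous; [lra |] |].
  - intros x _. apply continuous_Rmult; auto.
  - intros x Hx. rewrite Rabs_mult, <- (Rmult_1_l M).
    apply Rmult_le_compat; [apply Rabs_pos | apply Rabs_pos | apply Bphi | apply Bg; lra].
Qed.

Section OscillatoryIntegral.

Variables (g phi Q P : R -> R) (PB A M : R).
Hypotheses (Cg : forall x, continuous g x) (Cphi : forall x, continuous phi x)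
  (CQ : forall x, continuous Q x) (HP : forall x, is_derive P x (phi x * Q x))
  (BP : forall x, Rabs (P x) <= PB) (Bphi : forall x, Rabs (phi x) <= 1)
  (Bg : forall x, 0 <= x -> Rabs (g x) <= M)
  (Hasym : forall x, 2 <= x -> Rabs (g x - Q x / x) <= A / (x * x)).

Lemma abs_RInt_oscillatory_le_far (r r' : R) : 2 <= r <= r' ->
  Rabs (RInt (fun t => phi t * g t) r r') <= (3 * PB + A) / r.
Proof.
  intros Hr.
  assert (C1 : forall x, r <= x <= r' -> continuous (fun t => phi t * Q t / t) x).
  { intros x Hx. apply continuous_Rmult; [apply continuous_Rmult; auto | apply continuous_inv; lra]. }
  assert (C2 : forall x, r <= x <= r' -> continuous (fun t => phi t * (g t - Q t / t)) x).
  { intros x Hx. apply continuous_Rmult; [auto |].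
    apply continuous_Rminus; [auto | apply continuous_Rmult; [auto | apply continuous_inv; lra]]. }
  assert (E : RInt (fun t => phi t * g t) r r'
              = RInt (fun t => phi t * Q t / t) r r' + RInt (fun t => phi t * (g t - Q t / t)) r r').
  { rewrite <- (RInt_plus (V := R_CompleteNormedModule));
      [| apply ex_RInt_of_continuous; [lra | auto] ..].
    apply RInt_ext. intros x Hx. rewrite Rmin_left, Rmax_right in Hx by lra. cbn. field. lra. }
  assert (B1 : Rabs (RInt (fun t => phi t * Q t / t) r r') <= 3 * PB / r).
  { apply (abs_RInt_derive_div_le P (fun t => phi t * Q t)); auto; try lra.
    intros x. apply continuous_Rmult; auto. }
  assert (B2 : Rabs (RInt (fun t => phi t * (g t - Q t / t)) r r') <= A / r).
  { apply abs_RInt_le_inv_sq; auto; try lra. intros x Hx. rewrite Rabs_mult.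
    rewrite <- (Rmult_1_l (A / (x * x))).
    apply Rmult_le_compat; [apply Rabs_pos | apply Rabs_pos | apply Bphi | apply Hasym; lra]. }
  rewrite E. eapply Rle_trans; [apply Rabs_triang |]. unfold Rdiv in *. lra.
Qed.

Lemma abs_RInt_oscillatory_le (r r' : R) : 1 <= r <= r' ->
  Rabs (RInt (fun t => phi t * g t) r r') <= (3 * PB + A + 2 * M) / r.
Proof.
  intros Hr.
  assert (PB0 : 0 <= PB) by (eapply Rle_trans; [apply Rabs_pos | apply (BP 0)]).
  assert (M0 : 0 <= M) by (eapply Rle_trans; [apply Rabs_pos | apply (Bg 0); lra]).
  assert (A0 : 0 <= A).
  { assert (H := Hasym 2 ltac:(lra)). assert (H0 := Rabs_pos (g 2 - Q 2 / 2)).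
    apply Rmult_le_reg_r with (/ (2 * 2)); [lra |]. unfold Rdiv in H. lra. }
  destruct (Rle_dec 2 r) as [H2 | H2].
  - eapply Rle_trans; [apply abs_RInt_oscillatory_le_far; lra |].
    apply Rmult_le_compat_r; [left; apply Rinv_0_lt_compat |]; lra.
  - assert (HMr : M <= 2 * M / r).
    { apply Rmult_le_reg_r with r; [lra |]. unfold Rdiv. rewrite Rmult_assoc, Rinv_l; nra. }
    assert (HPr : 0 <= (3 * PB + A) / r) by (apply Rdiv_le_0_compat; lra).
    destruct (Rle_dec r' 2) as [H3 | H3].
    + eapply Rle_trans; [apply abs_RInt_mult_le; auto; lra |].
      assert ((r' - r) * M <= M) by nra. unfold Rdiv in *. lra.
    + assert (Ech : RInt (fun t => phi t * g t) r 2 + RInt (fun t => phi t * g t) 2 r'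
                    = RInt (fun t => phi t * g t) r r')
        by (apply RInt_Chasles_continuous; intros; apply continuous_Rmult; auto).
      rewrite <- Ech.
      eapply Rle_trans; [apply Rabs_triang |].
      assert (B1 := abs_RInt_mult_le phi g r 2 M ltac:(lra) Cphi Cg Bphi Bg).
      assert (B2 := abs_RInt_oscillatory_le_far 2 r' ltac:(lra)).
      assert ((2 - r) * M <= M) by nra.
      assert ((3 * PB + A) / 2 <= (3 * PB + A) / r).
      { apply Rmult_le_compat_l; [lra | apply Rinv_le_contravar; lra]. }
      unfold Rdiv in *. lra.
Qed.

End OscillatoryIntegral.

Lemma limit_with_rate (F : R -> R) (K : R) :
  (forall r r', 1 <= r <= r' -> Rabs (F r' - F r) <= K / r) ->
  exists L, forall r, 1 <= r -> Rabs (F r - L) <= K / r.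
Proof.
  intros H.
  assert (K0 : 0 <= K).
  { assert (H1 := H 1 1 ltac:(lra)). rewrite Rminus_diag_eq, Rabs_R0 in H1 by reflexivity.
    unfold Rdiv in H1. rewrite Rinv_1, Rmult_1_r in H1. exact H1. }
  set (u := fun n : nat => F (INR n + 1)).
  assert (Hu : forall (N : nat) a b, INR N <= a <= b ->
             Rabs (F (b + 1) - F (a + 1)) <= K / (INR N + 1)).
  { intros N a b Hab. assert (HN := pos_INR N).
    eapply Rle_trans; [apply H; lra |].
    apply Rmult_le_compat_l; [exact K0 | apply Rinv_le_contravar; lra]. }
  assert (Hc : Cauchy_crit u).
  { intros e He. destruct (INR_unbounded (Rabs K / e)) as [N HN].
    assert (HN0 := pos_INR N).
    assert (Small : K / (INR N + 1) < e).
    { apply Rle_lt_trans with (Rabs K / (INR N + 1)).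
      - apply Rmult_le_compat_r; [left; apply Rinv_0_lt_compat; lra | apply RRle_abs].
      - apply Rmult_lt_reg_r with (INR N + 1); [lra |]. unfold Rdiv.
        rewrite Rmult_assoc, Rinv_l by lra. apply Rmult_lt_reg_r with (/ e); [apply Rinv_0_lt_compat; lra |].
        replace (e * (INR N + 1) * / e) with (INR N + 1) by (field; lra). unfold Rdiv in HN. lra. }
    exists N. intros n m Hn Hm. unfold R_dist, u.
    apply le_INR in Hn, Hm.
    destruct (Rle_dec (INR n) (INR m)).
    + rewrite Rabs_minus_sym. eapply Rle_lt_trans; [apply (Hu N); lra | exact Small].
    + eapply Rle_lt_trans; [apply (Hu N); lra | exact Small]. }
  destruct (Rcomplete.R_complete u Hc) as [L HL]. exists L. intros r Hr.
  apply Rle_plus_epsilon. intros e He.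
  destruct (HL e He) as [N1 HN1]. destruct (INR_unbounded r) as [N2 HN2].
  set (n := (N1 + N2)%nat).
  assert (H1 := HN1 n ltac:(unfold n; lia)). unfold R_dist, u in H1.
  assert (Hn : r <= INR n + 1) by (unfold n; rewrite plus_INR; assert (H0 := pos_INR N1); lra).
  assert (H2 := H r (INR n + 1) ltac:(lra)).
  replace (F r - L) with ((F r - F (INR n + 1)) + (F (INR n + 1) - L)) by ring.
  eapply Rle_trans; [apply Rabs_triang |]. rewrite Rabs_minus_sym in H2. lra.
Qed.

Lemma RInt_limit_with_rate (phi g : R -> R) (K : R) :
  (forall x, continuous phi x) -> (forall x, continuous g x) ->
  (forall x, Rabs (phi x) <= 1) -> (forall x, 0 <= x -> Rabs (g x) <= K) ->
  (forall r r', 1 <= r <= r' -> Rabs (RInt (fun t => phi t * g t) r r') <= K / r) ->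
  exists L,
    (forall r, 1 <= r -> Rabs (RInt (fun t => phi t * g t) 0 r - L) <= K / r) /\
    (forall r, 0 <= r -> Rabs (RInt (fun t => phi t * g t) 0 r - L) <= 2 * K).
Proof.
  intros Cphi Cg Bphi Bg Htail.
  set (F := fun r => RInt (fun t => phi t * g t) 0 r).
  assert (Ch : forall a b, F b - F a = RInt (fun t => phi t * g t) a b).
  { intros a b. unfold F.
    rewrite <- (RInt_Chasles_continuous (fun t => phi t * g t) 0 a b); [ring |].
    intros; apply continuous_Rmult; auto. }
  destruct (limit_with_rate F K) as [L HL].
  { intros r r' Hr. rewrite Ch. apply Htail; exact Hr. }
  assert (K0 : 0 <= K) by (eapply Rle_trans; [apply Rabs_pos | apply (Bg 0); lra]).
  assert (HL1 : Rabs (F 1 - L) <= K) by (rewrite <- (Rdiv_1_r K); apply HL; lra).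
  exists L. split; [exact HL |]. intros r Hr. fold (F r).
  destruct (Rle_dec 1 r) as [H1 | H1].
  - eapply Rle_trans; [apply HL; exact H1 |].
    assert (K / r <= K) by (rewrite <- (Rdiv_1_r K) at 2; apply Rmult_le_compat_l;
                              [exact K0 | apply Rinv_le_contravar; lra]).
    lra.
  - replace (F r - L) with ((F 1 - L) + - RInt (fun t => phi t * g t) r 1) by (rewrite <- Ch; ring).
    eapply Rle_trans; [apply Rabs_triang |]. rewrite Rabs_Ropp.
    assert (Hnear := abs_RInt_mult_le phi g r 1 K ltac:(lra) Cphi Cg Bphi Bg).
    assert ((1 - r) * K <= K) by nra. lra.
Qed.

(** * Hölder continuity *)

Lemma Rpower_ge_base (d a : R) : 0 < d <= 1 -> a <= 1 -> d <= Rpower d a.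
Proof.
  intros Hd Ha. unfold Rpower. rewrite <- (exp_ln d) at 1 by lra.
  assert (Hln : ln d <= 0) by (rewrite <- ln_1; apply ln_le; lra).
  destruct (Rle_lt_or_eq_dec (ln d) (a * ln d)) as [H | H]; [nra | | ].
  - left; apply exp_increasing; exact H.
  - rewrite <- H; lra.
Qed.

Lemma Rpower_ge_1 (d a : R) : 1 <= d -> 0 <= a -> 1 <= Rpower d a.
Proof. intros Hd Ha. rewrite <- (Rpower_O d) by lra. apply Rle_Rpower; lra. Qed.

Lemma lipschitz_bounded_C0alpha (f : R -> R) (L M a : R) : 0 < a < 1 ->
  (forall x y, 0 <= x -> 0 <= y -> Rabs (f x - f y) <= L * Rabs (x - y)) ->
  (forall x, 0 <= x -> Rabs (f x) <= M) ->
  C0alpha a f.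
Proof.
  intros Ha HL HM.
  assert (HM0 : 0 <= M) by (eapply Rle_trans; [apply (Rabs_pos (f 0)) | apply HM; lra]).
  assert (HL0 : 0 <= L).
  { assert (H := HL 0 1 ltac:(lra) ltac:(lra)).
    rewrite Rminus_0_l, Rabs_Ropp, Rabs_R1 in H. assert (H0 := Rabs_pos (f 0 - f 1)). lra. }
  exists M, (2 * M + L). split; [exact HM |].
  intros x y Hx Hy Hxy. set (d := Rabs (x - y)).
  assert (Hd : 0 < d) by (apply Rabs_pos_lt; lra).
  destruct (Rle_dec d 1) as [H1 | H1].
  - assert (H2 := Rpower_ge_base d a ltac:(lra) ltac:(lra)).
    eapply Rle_trans; [apply HL; auto |]. fold d. nra.
  - assert (H2 := Rpower_ge_1 d a ltac:(lra) ltac:(lra)).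
    assert (H3 : Rabs (f x - f y) <= 2 * M).
    { assert (T := Rabs_triang (f x) (- f y)). rewrite Rabs_Ropp in T.
      assert (H4 := HM x Hx). assert (H5 := HM y Hy). unfold Rminus. lra. }
    nra.
Qed.

Lemma holder_semi_le_nonneg (a B : R) (f : R -> R) : holder_semi_le a f B -> 0 <= B.
Proof.
  intros H. assert (H1 := H 0 1 ltac:(lra) ltac:(lra) ltac:(lra)).
  rewrite Rminus_0_l, Rabs_Ropp, Rabs_R1 in H1. unfold Rpower in H1.
  rewrite ln_1, Rmult_0_r, exp_0, Rmult_1_r in H1.
  assert (H0 := Rabs_pos (f 0 - f 1)). lra.
Qed.

Lemma holder_semi_le_comp_abs (F : R -> R) (a B : R) : 0 < a -> holder_semi_le a F B ->
  forall x y, x <> y -> Rabs (F (Rabs x) - F (Rabs y)) <= B * Rpower (Rabs (x - y)) a.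
Proof.
  intros Ha HF x y Hxy. assert (HB := holder_semi_le_nonneg a B F HF).
  destruct (Req_dec (Rabs x) (Rabs y)) as [E | E].
  - rewrite E, Rminus_diag_eq, Rabs_R0 by reflexivity.
    apply Rmult_le_pos; [exact HB | left; apply exp_pos].
  - eapply Rle_trans; [apply HF; auto; apply Rabs_pos |].
    apply Rmult_le_compat_l; [exact HB |].
    apply Rle_Rpower_l; [lra | split; [apply Rabs_pos_lt; lra | apply Rabs_triang_inv2]].
Qed.

Lemma holder_continuous (f : R -> R) (a B : R) : 0 < a ->
  (forall x y, x <> y -> Rabs (f x - f y) <= B * Rpower (Rabs (x - y)) a) ->
  forall x, continuous f x.
Proof.
  intros Ha Hf x. apply continuity_pt_filterlim. intros eps He. simpl.
  set (B' := Rabs B + 1). assert (HB' : 0 < B') by (unfold B'; assert (H0 := Rabs_pos B); lra).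
  exists (Rpower (eps / B') (1 / a)). split; [apply exp_pos |].
  intros y [[_ Hxy] Hd]. unfold R_dist in *.
  assert (Hlt : Rpower (Rabs (y - x)) a < eps / B').
  { replace (eps / B') with (Rpower (Rpower (eps / B') (1 / a)) a).
    - apply Rlt_Rpower_l; [exact Ha | split; [apply Rabs_pos_lt; lra | exact Hd]].
    - rewrite Rpower_mult. replace (1 / a * a) with 1 by (field; lra).
      apply Rpower_1, Rdiv_lt_0_compat; lra. }
  assert (Hpos : 0 < Rpower (Rabs (y - x)) a) by apply exp_pos.
  eapply Rle_lt_trans; [apply Hf; lra |].
  apply Rle_lt_trans with (B' * Rpower (Rabs (y - x)) a).
  - apply Rmult_le_compat_r; [lra |]. unfold B'. assert (B <= Rabs B) by apply RRle_abs. lra.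
  - apply Rmult_lt_reg_l with (/ B'); [apply Rinv_0_lt_compat; lra |].
    rewrite <- Rmult_assoc, Rinv_l by lra. unfold Rdiv in Hlt. lra.
Qed.

(** * The regular homogeneous solution *)

Lemma harmonic_solution_trig (s : R) (w w1 w2 : R -> R) : 0 < s ->
  (forall r, 0 < r -> is_derive w r (w1 r) /\ is_derive w1 r (w2 r) /\ w2 r = - (s * s) * w r) ->
  exists p q, forall r, 0 < r -> w r = p * sin (s * r) + q * cos (s * r).
Proof.
  intros Hs H.
  set (p := w 1 * sin s + w1 1 * cos s / s).
  set (q := w 1 * cos s - w1 1 * sin s / s).
  exists p, q.
  set (z := fun r => w r - (p * sin (s * r) + q * cos (s * r))).
  set (z1 := fun r => w1 r - (p * s * cos (s * r) - q * s * sin (s * r))).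
  (* the energy of the difference z is conserved, and vanishes at r = 1 *)
  set (E := fun r => z1 r * z1 r + (s * s) * (z r * z r)).
  assert (HE : forall r, 0 < r -> is_derive E r 0).
  { intros r Hr. destruct (H r Hr) as [H1 [H2 H3]].
    assert (Dz : is_derive z r (z1 r)).
    { apply is_derive_Rminus; [exact H1 |]. auto_derive; [auto | ring]. }
    assert (Dz1 : is_derive z1 r (w2 r + (s * s) * (p * sin (s * r) + q * cos (s * r)))).
    { eapply is_derive_eq; [apply is_derive_Rminus; [exact H2 |]; auto_derive; auto | ring]. }
    eapply is_derive_eq.
    - apply is_derive_Rplus; [apply is_derive_Rmult; eauto |].
      apply is_derive_scal, is_derive_Rmult; eauto.
    - rewrite H3. unfold z, z1. ring. }
  assert (E1 : E 1 = 0).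
  { assert (SC := sin2_cos2 s). unfold Rsqr in SC.
    assert (Z0 : z 1 = 0).
    { unfold z, p, q. rewrite Rmult_1_r. rewrite <- (Rmult_1_r (w 1)) at 1. rewrite <- SC. field; lra. }
    assert (Z1 : z1 1 = 0).
    { unfold z1, p, q. rewrite Rmult_1_r. rewrite <- (Rmult_1_r (w1 1)) at 1. rewrite <- SC. field; lra. }
    unfold E. rewrite Z0, Z1. ring. }
  intros r Hr.
  assert (Er : E r = 0) by (rewrite (const_of_derive_zero E 1 r); auto; lra).
  unfold E in Er.
  assert (0 <= z1 r * z1 r) by nra.
  assert (0 <= (s * s) * (z r * z r)) by (apply Rmult_le_pos; nra).
  assert (Zr : (s * s) * (z r * z r) = 0) by lra.
  apply Rmult_integral in Zr. destruct Zr as [Zr | Zr]; [nra |].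
  apply Rmult_integral in Zr. unfold z in Zr. destruct Zr; lra.
Qed.

Lemma radial_homogeneous_harmonic (s : R) (phi : R -> R) : 0 < s ->
  solves_radial (s * s) (fun _ => 0) phi ->
  exists p q, forall r, 0 < r -> r * phi r = p * sin (s * r) + q * cos (s * r).
Proof.
  intros Hs [phi1 [phi2 Hphi]].
  apply (harmonic_solution_trig s (fun r => r * phi r) (fun r => phi r + r * phi1 r)
           (fun r => 2 * phi1 r + r * phi2 r) Hs).
  intros r Hr. destruct (Hphi r Hr) as [D1 [D2 E]]. split; [| split].
  - eapply is_derive_eq; [apply is_derive_Rmult; [apply (is_derive_id r) | exact D1] | cbn; ring].
  - eapply is_derive_eq.
    + apply is_derive_Rplus; [exact D1 |]. apply is_derive_Rmult; [apply (is_derive_id r) | exact D2].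
    + cbn; ring.
  - replace (2 * phi1 r) with (r * (2 / r * phi1 r)) by (field; lra). nra.
Qed.

Lemma continuous_right_bound (f : R -> R) (x c M : R) : continuity_pt f x ->
  (forall y, x < y <= x + 1 -> Rabs (f y - c) <= M * (y - x)) -> f x = c.
Proof.
  intros Hc Hy. destruct (Req_dec (f x) c) as [E | E]; [exact E | exfalso].
  set (e := Rabs (f x - c)). assert (He : 0 < e) by (apply Rabs_pos_lt; lra).
  destruct (Hc (e / 2)) as [d [Hd Hfd]]; [lra |]. simpl in Hfd. unfold R_dist in Hfd.
  assert (HM : 0 < Rabs M + 1) by (assert (H0 := Rabs_pos M); lra).
  set (y := x + Rmin 1 (Rmin (d / 2) (e / (2 * (Rabs M + 1))))).
  assert (Hyx : 0 < y - x <= Rmin (d / 2) (e / (2 * (Rabs M + 1)))).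
  { unfold y. split; [| ring_simplify; apply Rmin_r].
    ring_simplify. repeat apply Rmin_glb_lt; try lra. apply Rdiv_lt_0_compat; lra. }
  assert (Hy1 : y - x <= 1) by (unfold y; ring_simplify; apply Rmin_l).
  assert (Hyd : y - x < d) by (assert (H1 := Rmin_l (d / 2) (e / (2 * (Rabs M + 1)))); lra).
  assert (Hye : y - x <= e / (2 * (Rabs M + 1)))
    by (assert (H1 := Rmin_r (d / 2) (e / (2 * (Rabs M + 1)))); lra).
  assert (Near : Rabs (f y - f x) < e / 2).
  { apply Hfd. split; [split; [exact I | lra] |]. rewrite Rabs_right; lra. }
  assert (Bound : Rabs (f y - c) < e / 2).
  { eapply Rle_lt_trans; [apply Hy; lra |].
    apply Rle_lt_trans with (Rabs M * (y - x)).
    - apply Rmult_le_compat_r; [lra | apply RRle_abs].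
    - apply Rle_lt_trans with (Rabs M * (e / (2 * (Rabs M + 1)))).
      + apply Rmult_le_compat_l; [apply Rabs_pos | exact Hye].
      + apply Rmult_lt_reg_r with (2 * (Rabs M + 1)); [lra |].
        unfold Rdiv. field_simplify; [nra | lra]. }
  assert (T := Rabs_triang (f x - f y) (f y - c)). rewrite Rabs_minus_sym in Near.
  replace (f x - f y + (f y - c)) with (f x - c) in T by ring. fold e in T. lra.
Qed.

Lemma periodic_decaying_zero (s K R0 : R) (f : R -> R) : 0 < s -> 0 < R0 ->
  (forall x (n : nat), f (x + 2 * INR n * PI / s) = f x) ->
  (forall r, R0 <= r -> Rabs (f r) <= K / r) ->
  forall x, f x = 0.
Proof.
  intros Hs HR0 Hper Hb x.
  destruct (Req_dec (f x) 0) as [E | E]; [exact E | exfalso].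
  set (e := Rabs (f x)). assert (He : 0 < e) by (apply Rabs_pos_lt; auto).
  set (T := R0 + Rabs K / e + Rabs x).
  destruct (INR_unbounded (T * s / (2 * PI))) as [n Hn].
  assert (HPI := PI_RGT_0).
  set (y := x + 2 * INR n * PI / s).
  assert (Hy : T < y - x).
  { unfold y. apply Rmult_lt_compat_r with (r := 2 * PI / s) in Hn; [| apply Rdiv_lt_0_compat; lra].
    replace (T * s / (2 * PI) * (2 * PI / s)) with T in Hn by (field; lra).
    replace (INR n * (2 * PI / s)) with (2 * INR n * PI / s) in Hn by (field; lra). lra. }
  assert (Hx := Rle_abs (- x)). rewrite Rabs_Ropp in Hx.
  assert (HKe : 0 <= Rabs K / e) by (apply Rdiv_le_0_compat; [apply Rabs_pos | lra]).
  assert (HyK : Rabs K < y * e).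
  { apply Rmult_lt_reg_r with (/ e); [apply Rinv_0_lt_compat; lra |].
    replace (y * e * / e) with y by (field; lra). unfold T, Rdiv in *. lra. }
  assert (Hfy := Hb y ltac:(unfold T in Hy; lra)).
  assert (Efy : f y = f x) by apply Hper. rewrite Efy in Hfy. fold e in Hfy.
  assert (K / y < e).
  { apply Rmult_lt_reg_r with y; [unfold T in Hy; lra |].
    replace (K / y * y) with K by (field; unfold T in Hy; lra).
    assert (K <= Rabs K) by apply RRle_abs. lra. }
  lra.
Qed.

Lemma regular_radial_phase (lam zeta : R) (J : R -> R) : 0 < lam ->
  solves_radial lam (fun _ => 0) J -> bounded_near0 J ->
  bigO_inv_sq J (fun r => / r * cos (sqrt lam * r - zeta)) ->
  exists p, p * p = 1 /\ forall x,
    cos (sqrt lam * x - zeta) = p * sin (sqrt lam * x) /\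
    sin (sqrt lam * x - zeta) = - p * cos (sqrt lam * x).
Proof.
  intros Hl HJ [M HM] [K [R0 HK]].
  set (s := sqrt lam). assert (Hs : 0 < s) by (apply sqrt_lt_R0; auto).
  assert (Hss : s * s = lam) by (apply sqrt_sqrt; lra).
  rewrite <- Hss in HJ.
  destruct (radial_homogeneous_harmonic s J Hs HJ) as [p [q Hpq]].
  assert (Hq : q = 0).
  { set (w := fun r => p * sin (s * r) + q * cos (s * r)).
    assert (Hw0 : w 0 = q) by (unfold w; rewrite Rmult_0_r, sin_0, cos_0; ring).
    rewrite <- Hw0. apply (continuous_right_bound w 0 0 M).
    - apply continuity_pt_filterlim, continuous_of_is_derive with (p * s * cos (s * 0) - q * s * sin (s * 0)).
      unfold w. auto_derive; [auto | ring].
    - intros y Hy. unfold w. rewrite <- Hpq by lra. rewrite Rminus_0_r, Rminus_0_r, Rabs_mult, Rabs_right by lra.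
      rewrite Rmult_comm. apply Rmult_le_compat_r; [lra | apply HM; lra]. }
  subst q.
  set (d := fun x => p * sin (s * x) - cos (s * x - zeta)).
  assert (Hd : forall x, d x = 0).
  { apply (periodic_decaying_zero s (Rabs K) (Rmax R0 1) d Hs); [apply Rlt_le_trans with 1; [lra | apply Rmax_r] | |].
    - intros x n. unfold d.
      replace (s * (x + 2 * INR n * PI / s)) with (s * x + 2 * INR n * PI) by (field; lra).
      rewrite sin_period.
      replace (s * x + 2 * INR n * PI - zeta) with ((s * x - zeta) + 2 * INR n * PI) by ring.
      rewrite cos_period. reflexivity.
    - intros r Hr. assert (Hr1 : 1 <= r) by (eapply Rle_trans; [apply Rmax_r | exact Hr]).
      assert (H1 := HK r ltac:(eapply Rle_trans; [apply Rmax_l | exact Hr])).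
      assert (EJ : J r = p * sin (s * r) / r).
      { apply Rmult_eq_reg_l with r; [| lra]. rewrite Hpq by lra. field. lra. }
      rewrite EJ in H1. fold s in H1.
      replace (p * sin (s * r) / r - / r * cos (s * r - zeta)) with (d r / r) in H1 by (unfold d; field; lra).
      replace (d r) with (d r / r * r) by (field; lra).
      rewrite Rabs_mult, (Rabs_right r) by lra.
      apply Rle_trans with (K / (r * r) * r); [apply Rmult_le_compat_r; lra |].
      replace (K / (r * r) * r) with (K / r) by (field; lra).
      apply Rmult_le_compat_r; [left; apply Rinv_0_lt_compat; lra | apply RRle_abs]. }
  assert (Hc : forall x, cos (s * x - zeta) = p * sin (s * x)) by (intros x; specialize (Hd x); unfold d in Hd; lra).
  assert (Hsn : forall x, sin (s * x - zeta) = - p * cos (s * x)).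
  { intros x. assert (H := Hc (x + PI / 2 / s)).
    replace (s * (x + PI / 2 / s)) with (s * x + PI / 2) in H by (field; lra).
    replace (s * x + PI / 2 - zeta) with ((s * x - zeta) + PI / 2) in H by ring.
    rewrite cos_plus, sin_plus, cos_PI2, sin_PI2 in H. lra. }
  exists p. split.
  - assert (H1 := Hc 0). assert (H2 := Hsn 0). assert (H3 := sin2_cos2 (s * 0 - zeta)). unfold Rsqr in H3.
    rewrite H1, H2, Rmult_0_r, sin_0, cos_0 in H3. lra.
  - intros x. split; [apply Hc | apply Hsn].
Qed.

Lemma Rabs_mult_sign (p x : R) : p * p = 1 -> Rabs (p * x) = Rabs x.
Proof.
  intros Hp. assert (H := Rabs_pos p).
  assert (Rabs p * Rabs p = 1) by (rewrite <- Rabs_mult, Hp; apply Rabs_R1).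
  rewrite Rabs_mult. replace (Rabs p) with 1 by nra. ring.
Qed.

(** * Variation of parameters *)

Section VariationOfParameters.

Variables (s LA : R) (g : R -> R).
Hypotheses (Hs : 0 < s) (Cg : forall x, continuous g x).

(* u solves u'' + s^2 u = g by variation of parameters.  Subtracting the limit LA of the
   cosine integral removes the sin (s r) component of u at infinity, and u (0) = 0 makes
   h = u / r regular at 0. *)
Definition vp_A (r : R) : R := RInt (fun t => cos (s * t) * g t) 0 r - LA.
Definition vp_B (r : R) : R := RInt (fun t => sin (s * t) * g t) 0 r.
Definition vp_u (r : R) : R := (sin (s * r) * vp_A r - cos (s * r) * vp_B r) / s.
Definition vp_du (r : R) : R := cos (s * r) * vp_A r + sin (s * r) * vp_B r.
Definition vp_ddu (r : R) : R := - s * sin (s * r) * vp_A r + s * cos (s * r) * vp_B r + g r.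
Definition vp_h (r : R) : R := if Rle_dec r 0 then vp_du 0 else vp_u r / r.
Definition vp_dh (r : R) : R := vp_du r / r - vp_u r / (r * r).
Definition vp_ddh (r : R) : R :=
  vp_ddu r / r - 2 * vp_du r / (r * r) + 2 * vp_u r / (r * r * r).

Lemma vp_u_derive (r : R) :
  is_derive vp_u r (vp_du r) /\ is_derive vp_du r (vp_ddu r) /\
  vp_ddu r = - (s * s) * vp_u r + g r.
Proof.
  assert (Ccos : forall x, continuous (fun t => cos (s * t) * g t) x)
    by (intros x; apply continuous_Rmult; [apply continuous_cos_mult | auto]).
  assert (Csin : forall x, continuous (fun t => sin (s * t) * g t) x)
    by (intros x; apply continuous_Rmult; [apply continuous_sin_mult | auto]).
  assert (DA : is_derive vp_A r (cos (s * r) * g r)).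
  { unfold vp_A. eapply is_derive_eq.
    - apply is_derive_Rminus; [apply (is_derive_RInt_from_0 _ r Ccos) | apply is_derive_const].
    - cbn. ring. }
  assert (DB : is_derive vp_B r (sin (s * r) * g r)) by apply (is_derive_RInt_from_0 _ r Csin).
  assert (Dsin : is_derive (fun t => sin (s * t)) r (s * cos (s * r))) by (auto_derive; auto; ring).
  assert (Dcos : is_derive (fun t => cos (s * t)) r (- s * sin (s * r))) by (auto_derive; auto; ring).
  split; [| split].
  - unfold vp_u. eapply is_derive_eq.
    + apply (is_derive_Rmult _ (fun _ => / s)); [| apply is_derive_const].
      apply is_derive_Rminus; apply is_derive_Rmult; eauto.
    + unfold vp_du. cbn. field. lra.
  - unfold vp_du. eapply is_derive_eq; [apply is_derive_Rplus; apply is_derive_Rmult; eauto |].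
    unfold vp_ddu. assert (SC := sin2_cos2 (s * r)). unfold Rsqr in SC.
    replace (g r) with (g r * (sin (s * r) * sin (s * r) + cos (s * r) * cos (s * r))) at 3
      by (rewrite SC; ring).
    ring.
  - unfold vp_ddu, vp_u. field. lra.
Qed.

Lemma vp_u_0 : vp_u 0 = 0.
Proof. unfold vp_u, vp_B. rewrite Rmult_0_r, sin_0, cos_0, RInt_point. cbn. field. lra. Qed.

Lemma vp_h_pos (r : R) : 0 < r -> vp_h r = vp_u r / r.
Proof. intros H. unfold vp_h. destruct (Rle_dec r 0); [lra | reflexivity]. Qed.

Lemma vp_h_0 : vp_h 0 = vp_du 0.
Proof. unfold vp_h. destruct (Rle_dec 0 0); [reflexivity | lra]. Qed.

Lemma vp_h_ode (r : R) : 0 < r ->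
  is_derive vp_h r (vp_dh r) /\ is_derive vp_dh r (vp_ddh r) /\
  vp_ddh r + 2 / r * vp_dh r + (s * s) * vp_h r = g r / r.
Proof.
  intros Hr. destruct (vp_u_derive r) as [D1 [D2 E]].
  assert (Dinv := is_derive_Rinv r ltac:(lra)).
  assert (Dinv2 : is_derive (fun t => / (t * t)) r (- 2 / (r * r * r)))
    by (auto_derive; [intro; nra | field; lra]).
  split; [| split].
  - apply (is_derive_ext_loc (fun t => vp_u t / t)).
    + apply (filter_imp (fun t => 0 < t)); [| apply (open_gt 0 r Hr)].
      intros t Ht. symmetry. apply vp_h_pos, Ht.
    + eapply is_derive_eq; [apply (is_derive_Rmult vp_u (fun t => / t)); eauto |].
      unfold vp_dh. field. lra.
  - unfold vp_dh. eapply is_derive_eq.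
    + apply is_derive_Rminus; [apply (is_derive_Rmult vp_du (fun t => / t)); eauto |].
      apply (is_derive_Rmult vp_u (fun t => / (t * t))); eauto.
    + unfold vp_ddh. field. lra.
  - rewrite vp_h_pos by lra. unfold vp_dh, vp_ddh. rewrite E. field. lra.
Qed.

End VariationOfParameters.

Section VariationOfParametersBounds.

Variables (s LA KA KB M : R) (g : R -> R).
Hypotheses (Hs : 0 < s) (Cg : forall x, continuous g x)
  (BA : forall r, 0 <= r -> Rabs (vp_A s LA g r) <= KA)
  (BB : forall r, 0 <= r -> Rabs (vp_B s g r) <= KB)
  (Bg : forall r, 0 <= r -> Rabs (g r) <= M).

Lemma vp_u_bound (r : R) : 0 <= r -> Rabs (vp_u s LA g r) <= (KA + KB) / s.
Proof.
  intros Hr. unfold vp_u. apply Rabs_div_le; [lra |].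
  replace (sin (s * r) * vp_A s LA g r - cos (s * r) * vp_B s g r)
    with (sin (s * r) * vp_A s LA g r + - cos (s * r) * vp_B s g r) by ring.
  apply Rabs_unit_comb_le; auto; [apply Rabs_sin_le_1 | rewrite Rabs_Ropp; apply Rabs_cos_le_1].
Qed.

Lemma vp_du_bound (r : R) : 0 <= r -> Rabs (vp_du s LA g r) <= KA + KB.
Proof. intros Hr. apply Rabs_unit_comb_le; auto; [apply Rabs_cos_le_1 | apply Rabs_sin_le_1]. Qed.

Lemma vp_ddu_bound (r : R) : 0 <= r -> Rabs (vp_ddu s LA g r) <= s * (KA + KB) + M.
Proof.
  intros Hr. unfold vp_ddu. eapply Rle_trans; [apply Rabs_triang |].
  apply Rplus_le_compat; [| apply Bg; exact Hr].
  replace (- s * sin (s * r) * vp_A s LA g r + s * cos (s * r) * vp_B s g r)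
    with (s * (- sin (s * r) * vp_A s LA g r + cos (s * r) * vp_B s g r)) by ring.
  rewrite Rabs_mult, (Rabs_right s) by lra. apply Rmult_le_compat_l; [lra |].
  apply Rabs_unit_comb_le; auto; [rewrite Rabs_Ropp; apply Rabs_sin_le_1 | apply Rabs_cos_le_1].
Qed.

Lemma vp_du_lipschitz (x y : R) : 0 <= x <= y ->
  Rabs (vp_du s LA g y - vp_du s LA g x) <= (s * (KA + KB) + M) * (y - x).
Proof.
  intros Hxy. apply (mean_value_bound _ (vp_ddu s LA g)); [lra | |].
  - intros t _. apply (vp_u_derive s LA g Hs Cg t).
  - intros t Ht. apply vp_ddu_bound. lra.
Qed.

Let U0 := (KA + KB) / s.
Let U1 := KA + KB.
Let U2 := s * (KA + KB) + M.

Let U_nonneg : 0 <= U0 /\ 0 <= U1 /\ 0 <= U2.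
Proof.
  assert (H0 := Rabs_pos (vp_u s LA g 0)). assert (H1 := Rabs_pos (vp_du s LA g 0)).
  assert (H2 := Rabs_pos (vp_ddu s LA g 0)).
  assert (B0 := vp_u_bound 0 ltac:(lra)). assert (B1 := vp_du_bound 0 ltac:(lra)).
  assert (B2 := vp_ddu_bound 0 ltac:(lra)). unfold U0, U1, U2. lra.
Qed.

Lemma vp_u_linearization (r c : R) : 0 <= c <= r ->
  Rabs (vp_u s LA g r - vp_du s LA g c * r) <= U2 * r * r.
Proof.
  intros Hc. destruct U_nonneg as [_ [_ HU2]].
  assert (H := mean_value_linearization (vp_u s LA g) (vp_du s LA g) 0 r c (U2 * r) ltac:(lra)).
  rewrite vp_u_0, !Rminus_0_r in H by exact Hs. apply H.
  - intros t _. apply (vp_u_derive s LA g Hs Cg t).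
  - intros t Ht. destruct (Rle_dec t c).
    + rewrite Rabs_minus_sym. eapply Rle_trans; [apply vp_du_lipschitz; lra |].
      apply Rmult_le_compat_l; lra.
    + eapply Rle_trans; [apply vp_du_lipschitz; lra |]. apply Rmult_le_compat_l; lra.
Qed.

Lemma vp_dh_bound (r : R) : 0 < r -> Rabs (vp_dh s LA g r) <= U2 + U1 + U0.
Proof.
  intros Hr. destruct U_nonneg as [HU0 [HU1 HU2]]. destruct (Rle_dec r 1) as [Hr1 | Hr1].
  - assert (H := vp_u_linearization r r ltac:(lra)).
    replace (vp_dh s LA g r) with (- (vp_u s LA g r - vp_du s LA g r * r) / (r * r))
      by (unfold vp_dh; field; lra).
    assert (Rabs (- (vp_u s LA g r - vp_du s LA g r * r) / (r * r)) <= U2).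
    { unfold Rdiv. rewrite Rabs_mult, Rabs_Ropp, Rabs_inv, (Rabs_right (r * r)) by nra.
      apply Rmult_le_reg_r with (r * r); [nra |].
      rewrite Rmult_assoc, Rinv_l by nra. lra. }
    lra.
  - unfold vp_dh. unfold Rminus. eapply Rle_trans; [apply Rabs_triang |]. rewrite Rabs_Ropp.
    assert (H1 : Rabs (vp_du s LA g r / r) <= U1 / 1) by (apply Rabs_div_le; [lra | apply vp_du_bound; lra]).
    assert (H2 : Rabs (vp_u s LA g r / (r * r)) <= U0 / 1)
      by (apply Rabs_div_le; [nra | apply vp_u_bound; lra]).
    rewrite Rdiv_1_r in H1, H2. lra.
Qed.

Lemma vp_h_bound (x : R) : 0 <= x -> Rabs (vp_h s LA g x) <= U1 + U0.
Proof.
  intros Hx. destruct U_nonneg as [HU0 [HU1 HU2]].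
  destruct (Req_dec x 0) as [E | E].
  - subst x. rewrite vp_h_0. assert (H := vp_du_bound 0 ltac:(lra)). fold U1 in H. lra.
  - rewrite vp_h_pos by lra. destruct (Rle_dec x 1) as [Hx1 | Hx1].
    + assert (Hm := mean_value_bound (vp_u s LA g) (vp_du s LA g) 0 x U1 Hx
                      (fun t _ => proj1 (vp_u_derive s LA g Hs Cg t))
                      (fun t Ht => vp_du_bound t ltac:(lra))).
      rewrite vp_u_0, !Rminus_0_r in Hm by exact Hs.
      replace (U1 + U0) with ((U1 * x) / x + U0) by (field; lra).
      assert (Rabs (vp_u s LA g x / x) <= U1 * x / x) by (apply Rabs_div_le; [lra | exact Hm]).
      lra.
    + assert (H : Rabs (vp_u s LA g x / x) <= U0 / 1) by (apply Rabs_div_le; [lra | apply vp_u_bound; lra]).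
      rewrite Rdiv_1_r in H. lra.
Qed.

Lemma vp_h_lipschitz (x y : R) : 0 <= x -> 0 <= y ->
  Rabs (vp_h s LA g x - vp_h s LA g y) <= (U2 + U1 + U0) * Rabs (x - y).
Proof.
  destruct U_nonneg as [HU0 [HU1 HU2]].
  assert (Hpos : forall x y, 0 < x <= y ->
            Rabs (vp_h s LA g y - vp_h s LA g x) <= (U2 + U1 + U0) * (y - x)).
  { intros a b Hab. apply (mean_value_bound _ (vp_dh s LA g)); [lra | |].
    - intros t Ht. apply (vp_h_ode s LA g Hs Cg t). lra.
    - intros t Ht. apply vp_dh_bound. lra. }
  assert (H0 : forall y, 0 < y -> Rabs (vp_h s LA g y - vp_h s LA g 0) <= (U2 + U1 + U0) * (y - 0)).
  { intros b Hb. rewrite vp_h_0, vp_h_pos by lra.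
    assert (H := vp_u_linearization b 0 ltac:(lra)).
    replace (vp_u s LA g b / b - vp_du s LA g 0) with ((vp_u s LA g b - vp_du s LA g 0 * b) / b)
      by (field; lra).
    assert (Rabs ((vp_u s LA g b - vp_du s LA g 0 * b) / b) <= U2 * b * b / b)
      by (apply Rabs_div_le; [lra | exact H]).
    replace (U2 * b * b / b) with (U2 * b) in * by (field; lra). nra. }
  assert (Hle : forall x y, 0 <= x <= y ->
            Rabs (vp_h s LA g y - vp_h s LA g x) <= (U2 + U1 + U0) * (y - x)).
  { intros a b Hab. destruct (Req_dec a 0) as [Ea | Ea].
    - subst a. destruct (Req_dec b 0) as [Eb | Eb].
      + subst b. rewrite Rminus_diag_eq, Rabs_R0 by reflexivity. lra.
      + apply H0. lra.
    - apply Hpos. lra. }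
  intros Hx Hy. destruct (Rle_dec x y) as [Hxy | Hxy].
  - rewrite Rabs_minus_sym, (Rabs_minus_sym x y), (Rabs_right (y - x)) by lra. apply Hle. lra.
  - rewrite (Rabs_right (x - y)) by lra. apply Hle. lra.
Qed.

Lemma vp_h_C0alpha (a : R) : 0 < a < 1 -> C0alpha a (vp_h s LA g).
Proof.
  intros Ha. apply (lipschitz_bounded_C0alpha _ (U2 + U1 + U0) (U1 + U0) a Ha).
  - exact vp_h_lipschitz.
  - exact vp_h_bound.
Qed.

End VariationOfParametersBounds.

Theorem radial_solution_with_tail (s a K : R) (g : R -> R) : 0 < s -> 0 < a < 1 ->
  (forall x, continuous g x) -> (forall x, 0 <= x -> Rabs (g x) <= K) ->
  (forall r r', 1 <= r <= r' -> Rabs (RInt (fun t => cos (s * t) * g t) r r') <= K / r) ->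
  (forall r r', 1 <= r <= r' -> Rabs (RInt (fun t => sin (s * t) * g t) r r') <= K / r) ->
  exists h L,
    C0alpha a h /\ solves_radial (s * s) (fun r => g r / r) h /\ Rabs L <= 2 * K /\
    forall r, 1 <= r -> Rabs (h r + L * cos (s * r) / (s * r)) <= 2 * K / (s * r * r).
Proof.
  intros Hs Ha Cg Bg Tcos Tsin.
  assert (Ccos := continuous_cos_mult s). assert (Csin := continuous_sin_mult s).
  destruct (RInt_limit_with_rate _ g K Ccos Cg (fun x => Rabs_cos_le_1 _) Bg Tcos)
    as [LA [HA1 HA0]].
  destruct (RInt_limit_with_rate _ g K Csin Cg (fun x => Rabs_sin_le_1 _) Bg Tsin)
    as [LB [HB1 HB0]].
  assert (HLB : Rabs LB <= 2 * K).
  { assert (H := HB0 0 ltac:(lra)). rewrite RInt_point in H. cbn in H.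
    rewrite Rminus_0_l, Rabs_Ropp in H. exact H. }
  assert (BB : forall r, 0 <= r -> Rabs (vp_B s g r) <= 4 * K).
  { intros r Hr. unfold vp_B. replace (RInt _ 0 r) with ((RInt (fun t => sin (s * t) * g t) 0 r - LB) + LB)
      by ring.
    eapply Rle_trans; [apply Rabs_triang |]. assert (H := HB0 r Hr). lra. }
  exists (vp_h s LA g), LB. split; [| split; [| split]].
  - exact (vp_h_C0alpha s LA (2 * K) (4 * K) K g Hs Cg HA0 BB Bg a Ha).
  - exists (vp_dh s LA g), (vp_ddh s LA g). intros r Hr. exact (vp_h_ode s LA g Hs Cg r Hr).
  - exact HLB.
  - intros r Hr. rewrite vp_h_pos by lra. unfold vp_u.
    replace ((sin (s * r) * vp_A s LA g r - cos (s * r) * vp_B s g r) / s / r + LB * cos (s * r) / (s * r))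
      with ((sin (s * r) * vp_A s LA g r + - cos (s * r) * (vp_B s g r - LB)) / (s * r))
      by (field; lra).
    replace (2 * K / (s * r * r)) with ((K / r + K / r) / (s * r)) by (field; lra).
    apply Rabs_div_le; [nra |].
    apply Rabs_unit_comb_le; [apply Rabs_sin_le_1 | rewrite Rabs_Ropp; apply Rabs_cos_le_1 | |];
      [apply HA1 | apply HB1]; exact Hr.
Qed.

(** * The source term *)

Lemma cutoff_bounded (rho : R -> R) : smooth rho ->
  (forall r, 2 < r -> rho r = 1) -> (forall r, r < 1 -> rho r = 0) ->
  exists Mr, forall x, Rabs (rho x) <= Mr.
Proof.
  intros Hs H1 H0.
  destruct (continuity_ab_maj (fun x => Rabs (rho x)) 1 2 ltac:(lra)) as [xm [Hxm _]].
  { intros c _. apply continuity_pt_filterlim, continuous_Rabs_comp.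
    apply (ex_derive_continuous (V := R_NormedModule)), (Hs 1%nat). }
  exists (1 + Rabs (rho xm)). intros x. assert (Hm := Rabs_pos (rho xm)).
  destruct (Rlt_dec x 1) as [Hx | Hx]; [rewrite H0, Rabs_R0 by exact Hx; lra |].
  destruct (Rlt_dec 2 x) as [Hx' | Hx']; [rewrite H1, Rabs_R1 by exact Hx'; lra |].
  assert (H := Hxm x ltac:(lra)). cbn in H. lra.
Qed.

Lemma cutoff_eq_1 (rho : R -> R) : smooth rho -> (forall r, 2 < r -> rho r = 1) ->
  forall r, 2 <= r -> rho r = 1.
Proof.
  intros Hs H1 r Hr. destruct (Rle_lt_or_eq_dec 2 r Hr) as [Hlt | <-]; [apply H1, Hlt |].
  apply (continuous_right_bound rho 2 1 0).
  - apply continuity_pt_filterlim, (ex_derive_continuous (V := R_NormedModule)), (Hs 1%nat).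
  - intros y Hy. rewrite H1, Rminus_diag_eq, Rabs_R0 by (reflexivity || lra). lra.
Qed.

Lemma cutoff_div_continuous (rho : R -> R) : smooth rho -> (forall r, r < 1 -> rho r = 0) ->
  forall x, continuous (fun t => rho t * / t) x.
Proof.
  intros Hs H0 x. destruct (Rlt_dec x 1) as [Hx | Hx].
  - apply (continuous_ext_loc (fun t => rho t * / t) (fun _ => 0)).
    + apply (filter_imp (fun t => t < 1)); [| apply (open_lt 1 x Hx)].
      intros t Ht. cbn. rewrite H0 by exact Ht. ring.
    + apply continuous_const.
  - apply continuous_Rmult; [| apply continuous_inv; lra].
    apply (ex_derive_continuous (V := R_NormedModule)), (Hs 1%nat).
Qed.

(* Once the phase is fixed, sin^2, cos^2 and sin cos of (sqrt lam r - zeta) become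
   cos^2, sin^2 and - sin cos of (sqrt lam r); see [radial_source_eta]. *)
Definition trig_quad (s k1 k2 k3 x : R) : R :=
  k1 * (cos (s * x) * cos (s * x)) + k2 * (sin (s * x) * sin (s * x))
  - k3 * (sin (s * x) * cos (s * x)).

Lemma continuous_trig_quad (s k1 k2 k3 x : R) : continuous (trig_quad s k1 k2 k3) x.
Proof.
  apply continuous_of_is_derive with (Derive (trig_quad s k1 k2 k3) x).
  apply Derive_correct. unfold trig_quad. auto_derive. exact I.
Qed.

Definition trig_quad_prim_cos (s k1 k2 k3 x : R) : R :=
  (k1 * (sin (s * x) - sin (s * x) ^ 3 / 3) + k2 * (sin (s * x) ^ 3 / 3)
   + k3 * (cos (s * x) ^ 3 / 3)) / s.

Definition trig_quad_prim_sin (s k1 k2 k3 x : R) : R :=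
  (k1 * (- (cos (s * x) ^ 3 / 3)) + k2 * (- cos (s * x) + cos (s * x) ^ 3 / 3)
   + k3 * (- (sin (s * x) ^ 3 / 3))) / s.

Lemma is_derive_trig_quad_prim_cos (s k1 k2 k3 x : R) : 0 < s ->
  is_derive (trig_quad_prim_cos s k1 k2 k3) x (cos (s * x) * trig_quad s k1 k2 k3 x).
Proof.
  intros Hs. unfold trig_quad_prim_cos, trig_quad. auto_derive; [auto |].
  assert (SC := sin2_cos2 (s * x)). unfold Rsqr in SC.
  replace (k1 * (cos (s * x) * cos (s * x)))
    with (k1 * (cos (s * x) * cos (s * x)) + k1 * (1 - (sin (s * x) * sin (s * x) + cos (s * x) * cos (s * x))))
    by (rewrite SC; ring).
  field. lra.
Qed.

Lemma is_derive_trig_quad_prim_sin (s k1 k2 k3 x : R) : 0 < s ->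
  is_derive (trig_quad_prim_sin s k1 k2 k3) x (sin (s * x) * trig_quad s k1 k2 k3 x).
Proof.
  intros Hs. unfold trig_quad_prim_sin, trig_quad. auto_derive; [auto |].
  assert (SC := sin2_cos2 (s * x)). unfold Rsqr in SC.
  replace (k2 * (sin (s * x) * sin (s * x)))
    with (k2 * (sin (s * x) * sin (s * x)) + k2 * (1 - (sin (s * x) * sin (s * x) + cos (s * x) * cos (s * x))))
    by (rewrite SC; ring).
  field. lra.
Qed.

Lemma Rabs_lin3_le (k1 k2 k3 u v w c : R) : Rabs u <= c -> Rabs v <= c -> Rabs w <= c ->
  Rabs (k1 * u + k2 * v + k3 * w) <= c * (Rabs k1 + Rabs k2 + Rabs k3).
Proof.
  intros Hu Hv Hw. eapply Rle_trans; [apply Rabs_triang |].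
  eapply Rle_trans; [apply Rplus_le_compat_r, Rabs_triang |]. rewrite !Rabs_mult.
  assert (H1 := Rabs_pos k1). assert (H2 := Rabs_pos k2). assert (H3 := Rabs_pos k3).
  assert (Rabs k1 * Rabs u <= Rabs k1 * c) by (apply Rmult_le_compat_l; lra).
  assert (Rabs k2 * Rabs v <= Rabs k2 * c) by (apply Rmult_le_compat_l; lra).
  assert (Rabs k3 * Rabs w <= Rabs k3 * c) by (apply Rmult_le_compat_l; lra).
  lra.
Qed.

Lemma Rabs_cube_div3_le (a : R) : Rabs a <= 1 -> Rabs (a ^ 3 / 3) <= 1 / 3.
Proof.
  intros Ha. unfold Rdiv. rewrite Rabs_mult, <- RPow_abs, (Rabs_right (/ 3)) by lra.
  apply Rmult_le_compat_r; [lra |]. assert (H0 := Rabs_pos a). simpl. nra.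
Qed.

Lemma trig_quad_prim_bound (s k1 k2 k3 x : R) : 0 < s ->
  Rabs (trig_quad_prim_cos s k1 k2 k3 x) <= 2 * (Rabs k1 + Rabs k2 + Rabs k3) / s /\
  Rabs (trig_quad_prim_sin s k1 k2 k3 x) <= 2 * (Rabs k1 + Rabs k2 + Rabs k3) / s.
Proof.
  intros Hs.
  assert (Bs := Rabs_sin_le_1 (s * x)). assert (Bc := Rabs_cos_le_1 (s * x)).
  assert (Cs := Rabs_cube_div3_le _ Bs). assert (Cc := Rabs_cube_div3_le _ Bc).
  assert (T : forall a b, Rabs (a + b) <= Rabs a + Rabs b) by apply Rabs_triang.
  split; apply Rabs_div_le; try lra; apply Rabs_lin3_le; rewrite ?Rabs_Ropp; try lra.
  - unfold Rminus. eapply Rle_trans; [apply T |]. rewrite Rabs_Ropp. lra.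
  - eapply Rle_trans; [apply T |]. rewrite Rabs_Ropp. lra.
Qed.

Lemma trig_quad_bound (s k1 k2 k3 x : R) :
  Rabs (trig_quad s k1 k2 k3 x) <= Rabs k1 + Rabs k2 + Rabs k3.
Proof.
  unfold trig_quad. rewrite <- (Rmult_1_l (Rabs k1 + Rabs k2 + Rabs k3)).
  replace (k1 * (cos (s * x) * cos (s * x)) + k2 * (sin (s * x) * sin (s * x))
           - k3 * (sin (s * x) * cos (s * x)))
    with (k1 * (cos (s * x) * cos (s * x)) + k2 * (sin (s * x) * sin (s * x))
          + k3 * (- (sin (s * x) * cos (s * x)))) by ring.
  assert (Bs := Rabs_sin_le_1 (s * x)). assert (Bc := Rabs_cos_le_1 (s * x)).
  assert (P1 := Rabs_pos (sin (s * x))). assert (P2 := Rabs_pos (cos (s * x))).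
  apply Rabs_lin3_le; rewrite ?Rabs_Ropp, Rabs_mult; nra.
Qed.

Lemma x_div_succ_cube_le_1 (x : R) : 0 <= x -> x * / (1 + x) ^ 3 <= 1.
Proof.
  intros Hx. assert (0 < (1 + x) ^ 3) by (apply pow_lt; lra).
  apply Rmult_le_reg_r with ((1 + x) ^ 3); [lra |]. rewrite Rmult_assoc, Rinv_l by lra. nra.
Qed.

Lemma x_div_succ_cube_le_inv_sq (x : R) : 0 < x -> x * / (1 + x) ^ 3 <= / (x * x).
Proof.
  intros Hx. assert (0 < (1 + x) ^ 3) by (apply pow_lt; lra).
  apply Rmult_le_reg_r with ((1 + x) ^ 3 * (x * x)); [nra |].
  replace (x * / (1 + x) ^ 3 * ((1 + x) ^ 3 * (x * x))) with (x * x * x) by (field; lra).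
  replace (/ (x * x) * ((1 + x) ^ 3 * (x * x))) with ((1 + x) ^ 3) by (field; lra). nra.
Qed.

Lemma inv_sq_le_inv_succ_sq (r : R) : 1 <= r -> / (r * r) <= 4 * / ((1 + r) ^ 2).
Proof.
  intros Hr. assert (0 < (1 + r) ^ 2) by (apply pow_lt; lra).
  apply Rmult_le_reg_r with ((1 + r) ^ 2 * (r * r)); [nra |].
  replace (/ (r * r) * ((1 + r) ^ 2 * (r * r))) with ((1 + r) ^ 2) by (field; lra).
  replace (4 * / (1 + r) ^ 2 * ((1 + r) ^ 2 * (r * r))) with (4 * (r * r)) by (field; lra).
  nra.
Qed.

(* [x] times the source term; the weighted remainder [etabar (1 + r)^3] is evaluated
   at [|x|], which makes the function continuous on all of R. *)
Definition radial_source (s k1 k2 k3 : R) (rho F : R -> R) (x : R) : R :=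
  rho x * / x * trig_quad s k1 k2 k3 x + x * F (Rabs x) * / (1 + Rabs x) ^ 3.

Section RadialSource.

Variables (s k1 k2 k3 Mr A B a : R) (rho F : R -> R).
Hypotheses (Hs : 0 < s) (Ha : 0 < a < 1) (Hrho : smooth rho)
  (Hrho1 : forall r, 2 < r -> rho r = 1) (Hrho0 : forall r, r < 1 -> rho r = 0)
  (HMr : forall x, Rabs (rho x) <= Mr) (HA : sup_le F A) (HB : holder_semi_le a F B).

Let Sg := Rabs k1 + Rabs k2 + Rabs k3.

Lemma radial_source_continuous (x : R) : continuous (radial_source s k1 k2 k3 rho F) x.
Proof.
  assert (CF : continuous (fun t => F (Rabs t)) x).
  { apply (holder_continuous _ a B (proj1 Ha)). apply holder_semi_le_comp_abs; [apply Ha | exact HB]. }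
  assert (Cw : continuous (fun t => / (1 + Rabs t) ^ 3) x).
  { apply (continuous_comp Rabs (fun y => / (1 + y) ^ 3)); [apply continuous_Rabs |].
    assert (H := Rabs_pos x).
    apply continuous_of_is_derive with (- 3 * / (1 + Rabs x) ^ 4). auto_derive; [intro; nra | field; lra]. }
  unfold radial_source. apply continuous_Rplus.
  - apply (continuous_Rmult (fun t => rho t * / t)); [apply cutoff_div_continuous; assumption | apply continuous_trig_quad].
  - apply (continuous_Rmult (fun t => t * F (Rabs t))); [| exact Cw].
    apply (continuous_Rmult (fun t => t)); [apply continuous_id | exact CF].
Qed.

Lemma radial_source_remainder_bound (x : R) : 0 <= x ->
  Rabs (x * F (Rabs x) * / (1 + Rabs x) ^ 3) <= A * (x * / (1 + x) ^ 3).
Proof.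
  intros Hx. rewrite Rabs_right with x by lra.
  replace (x * F x * / (1 + x) ^ 3) with (F x * (x * / (1 + x) ^ 3)) by ring.
  assert (0 <= x * / (1 + x) ^ 3) by (apply Rmult_le_pos; [lra | left; apply Rinv_0_lt_compat, pow_lt; lra]).
  rewrite Rabs_mult, (Rabs_right (x * / (1 + x) ^ 3)) by lra.
  apply Rmult_le_compat_r; [lra | apply HA, Hx].
Qed.

Lemma radial_source_bound (x : R) : 0 <= x ->
  Rabs (radial_source s k1 k2 k3 rho F x) <= Mr * Sg + A.
Proof.
  intros Hx. unfold radial_source. eapply Rle_trans; [apply Rabs_triang |].
  assert (A0 : 0 <= A) by (eapply Rle_trans; [apply Rabs_pos | apply HA, Hx]).
  assert (T2 := radial_source_remainder_bound x Hx).
  assert (W := x_div_succ_cube_le_1 x Hx).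
  assert (T1 : Rabs (rho x * / x * trig_quad s k1 k2 k3 x) <= Mr * Sg).
  { assert (Q := trig_quad_bound s k1 k2 k3 x). fold Sg in Q.
    assert (M0 : 0 <= Mr) by (eapply Rle_trans; [apply Rabs_pos | apply (HMr x)]).
    destruct (Rlt_dec x 1) as [H1 | H1].
    - rewrite Hrho0 by exact H1. rewrite !Rmult_0_l, Rabs_R0. apply Rmult_le_pos; [lra |].
      eapply Rle_trans; [apply Rabs_pos | exact Q].
    - rewrite Rabs_mult. apply Rmult_le_compat; [apply Rabs_pos | apply Rabs_pos | | exact Q].
      assert (H := Rabs_div_le (rho x) x Mr 1 ltac:(lra) (HMr x)).
      unfold Rdiv in H. rewrite Rinv_1, Rmult_1_r in H. exact H. }
  assert (A * (x * / (1 + x) ^ 3) <= A) by (rewrite <- (Rmult_1_r A) at 2; apply Rmult_le_compat_l; lra).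
  lra.
Qed.

Lemma radial_source_asymptotic (x : R) : 2 <= x ->
  Rabs (radial_source s k1 k2 k3 rho F x - trig_quad s k1 k2 k3 x / x) <= A / (x * x).
Proof.
  intros Hx. unfold radial_source. rewrite (cutoff_eq_1 rho Hrho Hrho1 x Hx).
  set (w := x * F (Rabs x) * / (1 + Rabs x) ^ 3).
  replace (1 * / x * trig_quad s k1 k2 k3 x + w - trig_quad s k1 k2 k3 x / x) with w
    by (field; lra).
  eapply Rle_trans; [apply radial_source_remainder_bound; lra |].
  assert (A0 : 0 <= A) by (eapply Rle_trans; [apply Rabs_pos | apply (HA x); lra]).
  apply Rmult_le_compat_l; [exact A0 | apply x_div_succ_cube_le_inv_sq; lra].
Qed.

(* Dominates both the sup bound Mr Sg + A of the source and the tail constant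
   3 (2 Sg / s) + A + 2 (Mr Sg + A) of [abs_RInt_oscillatory_le]. *)
Let K := (6 / s + 2 * Mr + 3) * (Sg + A).

Let K_facts : 0 <= Sg /\ 0 <= A /\ 0 <= Mr.
Proof.
  unfold Sg. assert (H1 := Rabs_pos k1). assert (H2 := Rabs_pos k2). assert (H3 := Rabs_pos k3).
  assert (A0 : 0 <= A) by (eapply Rle_trans; [apply Rabs_pos | apply (HA 0); lra]).
  assert (M0 : 0 <= Mr) by (eapply Rle_trans; [apply Rabs_pos | apply (HMr 0)]).
  lra.
Qed.

Lemma radial_source_bound_K (x : R) : 0 <= x -> Rabs (radial_source s k1 k2 k3 rho F x) <= K.
Proof.
  intros Hx. eapply Rle_trans; [apply radial_source_bound, Hx |].
  destruct K_facts as [S0 [A0 M0]]. assert (0 <= 6 / s) by (apply Rdiv_le_0_compat; lra).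
  unfold K. nra.
Qed.

Lemma radial_source_tail (phi P : R -> R) :
  (forall x, continuous phi x) -> (forall x, Rabs (phi x) <= 1) ->
  (forall x, is_derive P x (phi x * trig_quad s k1 k2 k3 x)) -> (forall x, Rabs (P x) <= 2 * Sg / s) ->
  forall r r', 1 <= r <= r' ->
  Rabs (RInt (fun t => phi t * radial_source s k1 k2 k3 rho F t) r r') <= K / r.
Proof.
  intros Cphi Bphi HP BP r r' Hr.
  eapply Rle_trans.
  - apply (abs_RInt_oscillatory_le _ _ (trig_quad s k1 k2 k3) P (2 * Sg / s) A (Mr * Sg + A));
      auto using radial_source_continuous, radial_source_bound, radial_source_asymptotic,
        continuous_trig_quad.
  - apply Rmult_le_compat_r; [left; apply Rinv_0_lt_compat; lra |].
    destruct K_facts as [S0 [A0 M0]]. assert (Si : 0 < / s) by (apply Rinv_0_lt_compat; lra).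
    assert (0 <= / s * A) by nra. assert (0 <= Mr * A) by nra. unfold K, Rdiv. nra.
Qed.

Lemma radial_source_solution :
  exists h L,
    C0alpha a h /\ solves_radial (s * s) (fun r => radial_source s k1 k2 k3 rho F r / r) h /\
    Rabs L <= 2 * K /\
    forall r, 1 <= r -> Rabs (h r + L * cos (s * r) / (s * r)) <= 2 * K / (s * r * r).
Proof.
  assert (Ccos := continuous_cos_mult s). assert (Csin := continuous_sin_mult s).
  apply radial_solution_with_tail; auto using radial_source_continuous, radial_source_bound_K.
  - apply (radial_source_tail _ (trig_quad_prim_cos s k1 k2 k3) Ccos (fun x => Rabs_cos_le_1 _)).
    + intros x. apply is_derive_trig_quad_prim_cos, Hs.
    + intros x. apply trig_quad_prim_bound, Hs.
  - apply (radial_source_tail _ (trig_quad_prim_sin s k1 k2 k3) Csin (fun x => Rabs_sin_le_1 _)).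
    + intros x. apply is_derive_trig_quad_prim_sin, Hs.
    + intros x. apply trig_quad_prim_bound, Hs.
Qed.

Lemma radial_source_solution_bounds (C : R) : A + B + Sg < C ->
  exists h L,
    C0alpha a h /\ solves_radial (s * s) (fun r => radial_source s k1 k2 k3 rho F r / r) h /\
    Rabs (L / s) <= 8 * ((6 / s + 2 * Mr + 3) * C) / s /\
    forall r, 1 < r ->
      Rabs (h r + L * cos (s * r) / (s * r)) <= 8 * ((6 / s + 2 * Mr + 3) * C) / s * / (1 + r) ^ 2.
Proof.
  intros HC. destruct radial_source_solution as [h [L [Hh [Hsol [HL Hasym]]]]].
  assert (HK : 0 <= K <= (6 / s + 2 * Mr + 3) * C).
  { destruct K_facts as [S0 [A0 M0]]. assert (B0 := holder_semi_le_nonneg _ _ _ HB).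
    assert (0 <= 6 / s) by (apply Rdiv_le_0_compat; lra).
    unfold K. split; [apply Rmult_le_pos |]; nra. }
  exists h, L. split; [exact Hh | split; [exact Hsol | split]].
  - apply Rabs_div_le; [lra |]. lra.
  - intros r Hr. eapply Rle_trans; [apply Hasym; lra |].
    replace (2 * K / (s * r * r)) with (2 * K / s * / (r * r)) by (field; lra).
    replace (8 * ((6 / s + 2 * Mr + 3) * C) / s) with (4 * (2 * ((6 / s + 2 * Mr + 3) * C) / s))
      by (field; lra).
    assert (Hi := inv_sq_le_inv_succ_sq r ltac:(lra)).
    assert (0 < / (1 + r) ^ 2) by (apply Rinv_0_lt_compat, pow_lt; lra).
    assert (2 * K / s <= 2 * ((6 / s + 2 * Mr + 3) * C) / s)
      by (apply Rmult_le_compat_r; [left; apply Rinv_0_lt_compat |]; lra).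
    assert (0 <= 2 * K / s) by (apply Rdiv_le_0_compat; lra). nra.
Qed.

End RadialSource.

Lemma radial_source_eta (lam zeta p k1 k2 k3 : R) (rho etabar : R -> R) (r : R) :
  0 < r -> p * p = 1 ->
  cos (sqrt lam * r - zeta) = p * sin (sqrt lam * r) ->
  sin (sqrt lam * r - zeta) = - p * cos (sqrt lam * r) ->
  radial_source (sqrt lam) k1 k2 k3 rho (fun t => etabar t * (1 + t) ^ 3) r / r
  = eta_fun lam zeta k1 k2 k3 rho etabar r.
Proof.
  intros Hr Hp Hc Hsn. unfold radial_source, eta_fun, trig_quad.
  rewrite Hc, Hsn, Rabs_right by lra.
  transitivity (rho r * / (r * r) *
    (p * p * (k1 * (cos (sqrt lam * r) * cos (sqrt lam * r)) + k2 * (sin (sqrt lam * r) * sin (sqrt lam * r))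
     - k3 * (sin (sqrt lam * r) * cos (sqrt lam * r)))) + etabar r).
  - rewrite Hp. field. split; lra.
  - ring.
Qed.

Lemma solves_radial_ext (lam lam' : R) (f f' h : R -> R) : lam = lam' ->
  (forall r, 0 < r -> f r = f' r) -> solves_radial lam f h -> solves_radial lam' f' h.
Proof.
  intros <- Hf [h1 [h2 H]]. exists h1, h2. intros r Hr.
  destruct (H r Hr) as [D1 [D2 E]]. rewrite <- Hf by exact Hr. auto.
Qed.

Theorem lemma5 (lam alpha zeta : R) (J N rho : R -> R)
  (Hlam : 0 < lam) (Halpha : 0 < alpha < 1)
  (HJ : solves_radial lam (fun _ => 0) J) (HJreg : bounded_near0 J)
  (HJas : bigO_inv_sq J (fun r => / r * cos (sqrt lam * r - zeta)))
  (HN : solves_radial lam (fun _ => 0) N) (HNsing : ~ bounded_near0 N)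
  (HNas : bigO_inv_sq N (fun r => / r * sin (sqrt lam * r - zeta)))
  (Hrho : smooth rho)
  (Hrho1 : forall r, 2 < r -> rho r = 1) (Hrho0 : forall r, r < 1 -> rho r = 0) :
  forall C : R, exists C' : R,
  forall (k1 k2 k3 : R) (etabar : R -> R),
    (exists A B,
        sup_le (fun r => etabar r * (1 + r) ^ 3) A /\
        holder_semi_le alpha (fun r => etabar r * (1 + r) ^ 3) B /\
        A + B + Rabs k1 + Rabs k2 + Rabs k3 < C) ->
    exists (h : R -> R) (c1 : R) (hbar : R -> R),
      C0alpha alpha h /\
      solves_radial lam (eta_fun lam zeta k1 k2 k3 rho etabar) h /\
      (forall r, 1 < r -> h r = c1 * / r * sin (sqrt lam * r - zeta) + hbar r) /\
      Rabs c1 <= C' /\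
      (forall r, 1 < r -> Rabs (hbar r) <= C' * / ((1 + r) ^ 2)).
Proof.
  intros C.
  destruct (regular_radial_phase lam zeta J Hlam HJ HJreg HJas) as [p [Hp Hphase]].
  set (s := sqrt lam) in *. assert (Hs : 0 < s) by (apply sqrt_lt_R0; exact Hlam).
  destruct (cutoff_bounded rho Hrho Hrho1 Hrho0) as [Mr HMr].
  exists (8 * ((6 / s + 2 * Mr + 3) * C) / s).
  intros k1 k2 k3 etabar [A [B [HA [HB HC]]]].
  destruct (radial_source_solution_bounds s k1 k2 k3 Mr A B alpha rho _ Hs Halpha
              Hrho Hrho1 Hrho0 HMr HA HB C ltac:(lra)) as [h [L [Hh [Hsol [HL Hasym]]]]].
  exists h, (p * L / s), (fun r => h r - p * L / s * / r * sin (s * r - zeta)).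
  split; [exact Hh | split; [| split; [intros r _; ring | split]]].
  - eapply solves_radial_ext; [apply sqrt_sqrt; lra | | exact Hsol].
    intros r Hr. destruct (Hphase r) as [Hc Hsn].
    exact (radial_source_eta lam zeta p k1 k2 k3 rho etabar r Hr Hp Hc Hsn).
  - unfold Rdiv. rewrite Rmult_assoc, Rabs_mult_sign by exact Hp. exact HL.
  - intros r Hr. destruct (Hphase r) as [_ Hsn].
    replace (h r - p * L / s * / r * sin (s * r - zeta)) with (h r + L * cos (s * r) / (s * r))
      by (rewrite Hsn; transitivity (h r + p * p * L * cos (s * r) / (s * r));
          [rewrite Hp | ]; field; lra).
    exact (Hasym r Hr).
Qed.
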